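(* For any two metric directed multigraphs $X=(V,E,r,\ell)$ and $X'$, \[d_{\mathrm{GH}}(X,X')\le\tfrac12|E|\,d_{\vec{\mathcal G}}(X,X'),\] where on the left $X$ and $X'$ are viewed as metric spaces.
   Context: A metric directed multigraph (MDM) is $(V,E,r,\ell)$ with $V,E$ finite, $r=(r_1,r_2):E\to V\times V$ (tail, head), $\ell:E\to(0,\infty)$. $d_{\vec{\mathcal G}}(X,X')=\inf_{(f,g)}\sup_{e\in E}|\ell(e)-\ell'(g(e))|$, infimum over pairs of bijections $f:V\to V'$, $g:E\to E'$ with $r'(g(e))=(f(r_1(e)),f(r_2(e)))$, and $=+\infty$ if there is no such pair. An MDM is viewed as a metric space by replacing each edge $e$ by a line segment of length $\ell(e)$ glued at its endpoint vertices, forgetting orientations, with the induced path (length) metric. $d_{\mathrm{GH}}$ is the Gromov–Hausdorff distance. *)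

From HB Require Import structures.
From mathcomp Require Import all_boot all_order all_algebra.
From mathcomp Require Import all_classical all_reals ereal.
Set Implicit Arguments. Unset Strict Implicit. Unset Printing Implicit Defensive.
Import Order.TTheory GRing.Theory Num.Theory.
Local Open Scope classical_set_scope.
Local Open Scope ring_scope.

Record mdm (R : realType) := MDM {
  mV : finType;
  mE : finType;
  mr : mE -> mV * mV;            (* (tail, head) *)
  ml : mE -> R;
  ml_pos : forall e, 0 < ml e }.
Arguments mV {R} m.
Arguments mE {R} m.
Arguments mr {R} m e.
Arguments ml {R} m e.

Section MDM.
Variable R : realType.

(* d_{\vec G}: inf over compatible pairs of bijections of sup_e |l e - l' (g e)|
   (the sup over an empty edge set is taken to be 0); inf of the empty set is +oo. *)
Definition dG (X X' : mdm R) : \bar R :=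
  ereal_inf [set v : \bar R | exists (f : mV X -> mV X') (g : mE X -> mE X'),
     [/\ bijective f, bijective g,
         (forall e, mr X' (g e) = (f (mr X e).1, f (mr X e).2)) &
         v = (\big[Num.max/0]_(e : mE X) `|ml X e - ml X' (g e)|)%:E]].

(* The geometric realization.  Carrier before gluing: the vertices, plus the
   closed segments [0, l e], one for each edge e. *)
Definition point (X : mdm R) : Type :=
  (mV X + {et : mE X * R | 0 <= et.2 <= ml X et.1})%type.

Definition base_dist (X : mdm R) (p q : point X) : \bar R :=
  match p, q with
  | inl v, inl w => if v == w then 0%E else +oo%E
  | inr a, inr b => if (sval a).1 == (sval b).1
                    then (`|(sval a).2 - (sval b).2|)%:E else +oo%E
  | _, _ => +oo%E
  end.

Definition glue1 (X : mdm R) (p q : point X) : Prop :=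
  match p, q with
  | inr a, inl v =>
      ((sval a).2 = 0 /\ v = (mr X (sval a).1).1) \/
      ((sval a).2 = ml X (sval a).1 /\ v = (mr X (sval a).1).2)
  | _, _ => False
  end.

Definition glue (X : mdm R) (p q : point X) : Prop :=
  p = q \/ glue1 p q \/ glue1 q p.

Definition chain (X : mdm R) (p q : point X) (c : seq (point X * point X)) : Prop :=
  [/\ (0 < size c)%N, (head (p, p) c).1 = p, (last (q, q) c).2 = q &
      forall i, (i.+1 < size c)%N -> glue (nth (p, p) c i).2 (nth (p, p) c i.+1).1].

(* The quotient (glued) metric, i.e. the induced length metric of the metric
   graph; it is a pseudometric on [point X] whose metric quotient is the
   metric graph, and it takes the value +oo between different components. *)
Definition gdist (X : mdm R) (p q : point X) : \bar R :=
  ereal_inf [set s : \bar R | exists c, chain p q c /\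
                      s = (\sum_(x <- c) base_dist x.1 x.2)%E].

End MDM.

Section GH.
Variable R : realType.

Definition correspondence (A B : Type) (C : A -> B -> Prop) : Prop :=
  (forall a, exists b, C a b) /\ (forall b, exists a, C a b).

(* |a - b| for extended distances, with |+oo - +oo| := 0. *)
Definition disc (a b : \bar R) : \bar R :=
  if (a == +oo%E) && (b == +oo%E) then 0%E else `|(a - b)%E|%E.

Definition distortion (A B : Type) (dA : A -> A -> \bar R) (dB : B -> B -> \bar R)
  (C : A -> B -> Prop) : \bar R :=
  ereal_sup ([set 0%E] `|` [set s : \bar R | exists a b a' b',
     [/\ C a b, C a' b' & s = disc (dA a a') (dB b b')]]).

Definition dGH (A B : Type) (dA : A -> A -> \bar R) (dB : B -> B -> \bar R) : \bar R :=
  ((2^-1)%:E * ereal_inf [set s : \bar R | exists C : A -> B -> Prop,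
      correspondence C /\ s = distortion dA dB C])%E.

End GH.

From Pilot Require Import Defs.
From HB Require Import structures.
From mathcomp Require Import all_boot all_order all_algebra.
From mathcomp Require Import all_classical all_reals ereal.
From mathcomp Require Import lra zify ring.
Set Implicit Arguments. Unset Strict Implicit. Unset Printing Implicit Defensive.
Import Order.TTheory GRing.Theory Num.Theory.
Local Open Scope classical_set_scope.
Local Open Scope ring_scope.

(* Take compatible bijections (f, g) between the vertices and edges of X and X'
   and map the point at distance t along an edge e of X to the point at distance
   t l'(g e) / l(e) along g e.  Any chain between two points can be shortened so
   that it runs, in total, at most l(e) along each edge e; on such a chain the
   map changes the length by at most sum_e |l(e) - l'(g e)| <= |E| d, where d is
   the sup in d_G.  The same holds for the inverse map, so the graph of the map is
   a correspondence of distortion at most |E| d. *)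

Lemma split_first_last (T : Type) (a : pred T) s : has a s ->
  exists s1 x m s2,
    [/\ s = s1 ++ x :: m ++ s2, ~~ has a s1, a x, a (last x m) & ~~ has a s2].
Proof.
case/split_find=> x s1 s2 ax nas1.
have [|nas2] := boolP (has a s2); last by exists s1, x, [::], s2; rewrite cat_rcons.
rewrite -has_rev => as2; rewrite -[s2]revK; case/split_find: as2 => y t1 t2 ay nat1.
exists s1, x, (rcons (rev t2) y), (rev t1).
by rewrite last_rcons has_rev rev_cat rev_rcons cat_rcons -cats1 -catA.
Qed.

Section Chains.
Variables (R : realType) (X : mdm R).
Local Notation point := (Defs.point X).
Implicit Types (p q y : point) (z : point * point) (c : seq (point * point)).

Fixpoint linked y q c : Prop :=
  if c is z :: c' then Defs.glue y z.1 /\ linked z.2 q c' else y = q.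

Lemma linked_nth z q c d : linked z.2 q c <->
  (last z c).2 = q /\ forall i, (i.+1 < size (z :: c))%N ->
                       Defs.glue (nth d (z :: c) i).2 (nth d (z :: c) i.+1).1.
Proof.
elim: c z => [|z' c IH] z /=; first by split=> [->|[]].
rewrite IH; split=> [[gz [lz H]]|[lz H]].
  by split=> // -[|i] //= Hi; apply: H.
by split; [apply: (H 0%N) | split=> // i; apply: (H i.+1)].
Qed.

Lemma chainE p q c :
  Defs.chain p q c <-> [/\ (0 < size c)%N, (head (p, p) c).1 = p & linked p q c].
Proof.
case: c => [|z c]; first by split=> -[].
rewrite /Defs.chain /=; split.
  case=> _ zp l H; split=> //; split; first by rewrite zp; left.
  by apply/(linked_nth _ _ _ (p, p)).
by case=> _ zp [_ /(linked_nth _ _ _ (p, p))[]].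
Qed.

Lemma linked_cat y q c1 c2 (y' := last y [seq z.2 | z <- c1]) :
  linked y q (c1 ++ c2) <-> linked y y' c1 /\ linked y' q c2.
Proof.
rewrite {}/y'; elim: c1 y => [|z c1 IH] y /=; first by split=> // -[].
by rewrite IH; split=> [[a [b c]]|[[a b] c]].
Qed.

Definition same_piece z : bool :=
  match z with
  | (inl v, inl w) => v == w
  | (inr a, inr b) => (sval a).1 == (sval b).1
  | _ => false
  end.

Definition piece_dist z : R :=
  if z is (inr a, inr b) then `|(sval a).2 - (sval b).2| else 0.

Lemma piece_dist_ge0 z : 0 <= piece_dist z.
Proof. by case: z => [[v|a] [w|b]] /=. Qed.

Lemma base_dist_ge0 p q : (0 <= base_dist p q)%E.
Proof. by case: p q => [v|a] [w|b] //=; case: ifP. Qed.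

Lemma base_dist_same_piece z : same_piece z -> base_dist z.1 z.2 = (piece_dist z)%:E.
Proof. by case: z => [[v|a] [w|b]] //= /eqP ->; rewrite eqxx. Qed.

Lemma base_dist_cross z : ~~ same_piece z -> base_dist z.1 z.2 = +oo%E.
Proof. by case: z => [[v|a] [w|b]] //= /negbTE ->. Qed.

Lemma sum_base_dist c : (\sum_(z <- c) base_dist z.1 z.2)%E =
  if all same_piece c then (\sum_(z <- c) piece_dist z)%:E else +oo%E.
Proof.
case: ifP => [/allP c_same | /negbT].
  by rewrite -sumEFin; apply: eq_big_seq => z /c_same/base_dist_same_piece.
have sum_gt_ninfty c' : (-oo < \sum_(z <- c') base_dist z.1 z.2)%E.
  by apply: (@lt_le_trans _ _ 0%E) => //; apply: sume_ge0 => *; apply: base_dist_ge0.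
elim: c => [|z c IH] //=; rewrite big_cons negb_and => /orP[/base_dist_cross->|/IH->].
  by rewrite addye // gt_eqF.
by rewrite addey // gt_eqF // (lt_le_trans _ (base_dist_ge0 _ _)).
Qed.

Lemma gdist_ge0 p q : (0 <= gdist p q)%E.
Proof.
apply: le_ereal_inf_tmp => _ [c [_ ->]].
by apply: sume_ge0 => z _; apply: base_dist_ge0.
Qed.

Definition on_edge e z : bool := if z.1 is inr a then e == (sval a).1 else false.

Definition traversed e c : R := \sum_(z <- c | on_edge e z) piece_dist z.

Lemma on_edge_same_piece e z : on_edge e z -> same_piece z ->
  exists a b, [/\ z = (inr a, inr b), (sval a).1 = e & (sval b).1 = e].
Proof.
by case: z => [[v|a] [w|b]] //= /eqP ea /eqP ab; exists a, b; rewrite -ab ea.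
Qed.

Lemma segment_dist_le e (a b : {et : mE X * R | 0 <= et.2 <= ml X et.1}) :
  (sval a).1 = e -> (sval b).1 = e -> `|(sval a).2 - (sval b).2| <= ml X e.
Proof.
case: a b => -[ea ta] /= /andP[ta0 ta1] [[eb tb]] /= /andP[tb0 tb1] ea_e eb_e.
by subst; rewrite ler_norml; apply/andP; split; lra.
Qed.

Lemma sum_piece_dist_filter_le (P : pred (point * point)) c :
  \sum_(z <- c | P z) piece_dist z <= \sum_(z <- c) piece_dist z.
Proof.
by rewrite [leRHS](bigID P) /= lerDl sumr_ge0 // => z _; apply: piece_dist_ge0.
Qed.

(* The pieces from the first to the last one on e are replaced by the single
   piece of e joining their extreme points. *)
Lemma chain_shortcut p q c e :
  all same_piece c -> Defs.chain p q c -> ml X e < traversed e c ->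
  exists c', [/\ (size c' < size c)%N, all same_piece c', Defs.chain p q c' &
    \sum_(z <- c') piece_dist z <= \sum_(z <- c) piece_dist z].
Proof.
move=> /allP c_same /chainE[_ c_head c_linked] lt_e.
have /split_first_last[c1 [u [m [c3 [def_c c1_off eu em c3_off]]]]] : has (on_edge e) c.
  apply/negPn/negP => nh; move: lt_e; rewrite /traversed big_hasC //.
  by rewrite ltNge ltW ?ml_pos.
have u_same : same_piece u by apply: c_same; rewrite def_c mem_cat mem_head orbT.
have l_same : same_piece (last u m).
  by apply: c_same; rewrite def_c mem_cat -cat_cons mem_cat mem_last orbT.
have [a [b [def_u ae be]]] := on_edge_same_piece eu u_same.
have [a' [b' [def_l _ b'e]]] := on_edge_same_piece em l_same.
have lt_um : ml X e < \sum_(z <- u :: m) piece_dist z.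
  apply: (lt_le_trans lt_e); rewrite /traversed def_c big_catr // -cat_cons big_catl //.
  exact: sum_piece_dist_filter_le.
have m_neq0 : m != [::].
  apply: contraTneq lt_um => m0; rewrite m0 big_seq1 def_u -leNgt.
  exact: segment_dist_le.
exists (c1 ++ (inr a, inr b') :: c3); split.
- have : (0 < size m)%N by rewrite lt0n size_eq0.
  by rewrite def_c !size_cat /= size_cat; lia.
- apply/allP => z; rewrite mem_cat in_cons => /or3P[z1|/eqP->|z3].
  + by apply: c_same; rewrite def_c mem_cat z1.
  + by rewrite /= ae b'e.
  + by apply: c_same; rewrite def_c mem_cat -cat_cons mem_cat z3 !orbT.
- apply/chainE; split; first by rewrite size_cat addnS.
    by move: c_head; rewrite def_c def_u; case: (c1).
  move: c_linked; rewrite def_c !linked_cat /= linked_cat => -[l1 [g1 [_ l3]]].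
  split=> //=; split; first by move: g1; rewrite def_u.
  by move: l3; rewrite (last_map (fun z => z.2)) def_l.
- rewrite def_c !big_cat /= !big_cons lerD2l big_cat /= addrA lerD2r.
  move: lt_um; rewrite big_cons def_u /= => lt_um.
  by have := segment_dist_le ae b'e; lra.
Qed.

Lemma chain_traversed_le p q c : all same_piece c -> Defs.chain p q c ->
  exists c', [/\ all same_piece c', Defs.chain p q c',
    \sum_(z <- c') piece_dist z <= \sum_(z <- c) piece_dist z &
    forall e, traversed e c' <= ml X e].
Proof.
have [n] := ubnP (size c); elim: n c => // n IH c /ltnSE c_size c_same c_chain.
have [/forallP short | /forallPn[e]] := boolP [forall e, traversed e c <= ml X e].
  by exists c.
rewrite -ltNge => /(chain_shortcut c_same c_chain)[c' [c'_size c'_same c'_chain le_c'c]].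
have [|c'' [c''_same c''_chain le_c''c' c''_short]] := IH c' _ c'_same c'_chain.
  exact: leq_trans c'_size _.
by exists c''; split=> //; apply: le_trans le_c'c.
Qed.

End Chains.

Lemma ml_neq0 (R : realType) (X : mdm R) e : ml X e != 0.
Proof. by rewrite gt_eqF ?ml_pos. Qed.

Section PointMap.
Variables (R : realType) (X Y : mdm R) (f : mV X -> mV Y) (g : mE X -> mE Y).
Hypothesis fg_r : forall e, mr Y (g e) = (f (mr X e).1, f (mr X e).2).

Definition scale e : R := ml Y (g e) / ml X e.

Lemma ml_scale e : ml X e * scale e = ml Y (g e).
Proof. by rewrite mulrC mulfVK ?ml_neq0. Qed.

Lemma scale_ge0 e : 0 <= scale e.
Proof. by rewrite divr_ge0 ?ltW ?ml_pos. Qed.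

Definition rescale (et : mE X * R) : mE Y * R := (g et.1, et.2 * scale et.1).

Lemma rescale_in_segment et :
  0 <= et.2 <= ml X et.1 -> 0 <= (rescale et).2 <= ml Y (rescale et).1.
Proof.
case/andP=> t_ge0 t_le; rewrite /= mulr_ge0 ?scale_ge0 //= -ml_scale.
by rewrite ler_wpM2r ?scale_ge0.
Qed.

Definition point_map (x : Defs.point X) : Defs.point Y :=
  match x with
  | inl v => inl (f v)
  | inr a => inr (exist _ (rescale (sval a)) (rescale_in_segment (svalP a)))
  end.

Definition point_map2 (z : Defs.point X * Defs.point X) := (point_map z.1, point_map z.2).

Lemma glue_point_map x y : Defs.glue x y -> Defs.glue (point_map x) (point_map y).
Proof.
have glue1_map x' y' : Defs.glue1 x' y' -> Defs.glue1 (point_map x') (point_map y').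
  case: x' y' => [v|a] [w|b] //=; rewrite fg_r.
  by case=> -[-> ->]; [left; rewrite mul0r | right; rewrite ml_scale].
by case=> [->|[/glue1_map|/glue1_map]]; [left | right; left | right; right].
Qed.

Lemma linked_point_map y q c :
  linked y q c -> linked (point_map y) (point_map q) (map point_map2 c).
Proof.
elim: c y => [|z c IH] y /=; first by move->.
by case=> /glue_point_map yz /IH.
Qed.

Lemma chain_point_map p q c :
  Defs.chain p q c -> Defs.chain (point_map p) (point_map q) (map point_map2 c).
Proof.
case/chainE=> c_size c_head /linked_point_map c_linked; apply/chainE.
by rewrite size_map; case: c c_size c_head c_linked => //= z c _ ->.
Qed.

Lemma same_piece_point_map z : same_piece z -> same_piece (point_map2 z).
Proof. by case: z => [[v|a] [w|b]] //= /eqP->. Qed.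

Definition stretch (z : Defs.point X * Defs.point X) : R :=
  if z.1 is inr a then `|scale (sval a).1 - 1| else 0.

Lemma piece_dist_point_map z : same_piece z ->
  piece_dist (point_map2 z) <= piece_dist z + piece_dist z * stretch z.
Proof.
case: z => [[v|a] [w|b]] //=; first by rewrite mul0r addr0.
move=> /eqP <-; rewrite -mulrBl normrM (ger0_norm (scale_ge0 _)).
set d := `|_ - _|; have : d * (scale (sval a).1 - 1) <= d * stretch (inr a, inr b).
  by rewrite ler_wpM2l ?normr_ge0 //= ler_norm.
nra.
Qed.

Lemma dist_ml_scale e : `|ml X e - ml Y (g e)| = ml X e * `|scale e - 1|.
Proof.
by rewrite -ml_scale -{1}[ml X e]mulr1 -mulrBr normrM distrC gtr0_norm ?ml_pos.
Qed.

Definition length_defect : R := \sum_e `|ml X e - ml Y (g e)|.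

Lemma sum_stretch_le c : (forall e, traversed e c <= ml X e) ->
  \sum_(z <- c) piece_dist z * stretch z <= length_defect.
Proof.
move=> traversed_le.
have -> : \sum_(z <- c) piece_dist z * stretch z =
    \sum_(z <- c) \sum_e (if on_edge e z then piece_dist z * `|scale e - 1| else 0).
  apply: eq_bigr => -[[v|a] w] _ /=; first by rewrite mulr0 big1.
  by rewrite -big_mkcond big_pred1_eq.
rewrite exchange_big; apply: ler_sum => e _; rewrite -big_mkcond -mulr_suml.
by rewrite dist_ml_scale ler_wpM2r // traversed_le.
Qed.

Lemma gdist_point_map_le p q :
  (gdist (point_map p) (point_map q) <= gdist p q + length_defect%:E)%E.
Proof.
rewrite -leeBlDr //; apply: le_ereal_inf_tmp => _ [c [c_chain ->]].
rewrite leeBlDr // sum_base_dist; case: ifP => [c_same|]; last by rewrite addye ?leey.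
have [c' [c'_same c'_chain le_c'c traversed_le]] := chain_traversed_le c_same c_chain.
apply: le_trans (ereal_inf_lbound _) _.
  by exists (map point_map2 c'); split; first exact: chain_point_map.
rewrite sum_base_dist all_map (sub_all same_piece_point_map c'_same) -EFinD lee_fin.
rewrite big_map.
apply: le_trans (_ : \sum_(z <- c') (piece_dist z + piece_dist z * stretch z) <= _).
  rewrite big_seq_cond [leRHS]big_seq_cond; apply: ler_sum => z /andP[z_in _].
  exact/piece_dist_point_map/(allP c'_same).
by rewrite big_split lerD // sum_stretch_le.
Qed.

End PointMap.

Lemma point_mapK (R : realType) (X Y : mdm R) (f : mV X -> mV Y) (g : mE X -> mE Y)
    f' g' :
  cancel f f' -> cancel g g' -> cancel (point_map f g) (point_map f' g').
Proof.
move=> fK gK [v|[[e t] ?]] /=; first by rewrite fK.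
congr inr; apply: val_inj; rewrite /= /rescale /scale /= gK; congr pair.
by field; rewrite !ml_neq0.
Qed.

Lemma length_defect_inv (R : realType) (X Y : mdm R) (g : mE X -> mE Y) g' :
  cancel g g' -> cancel g' g -> length_defect g' = length_defect g.
Proof.
move=> gK g'K; rewrite /length_defect (reindex g) /=; last by exists g' => ? _.
by apply: eq_bigr => e _; rewrite gK distrC.
Qed.

Section GromovHausdorff.
Variable R : realType.

Lemma disc_le (u v : \bar R) (k : R) : 0 <= k -> (0 <= u)%E -> (0 <= v)%E ->
  (v <= u + k%:E)%E -> (u <= v + k%:E)%E -> (disc u v <= k%:E)%E.
Proof.
move=> k_ge0; case: u => [r| |] //; case: v => [s| |] //=; rewrite /disc /=.
by rewrite !lee_fin => _ _ *; rewrite ler_norml; apply/andP; split; lra.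
Qed.

Lemma dGH_le_surjection (A B : Type) (dA : A -> A -> \bar R) (dB : B -> B -> \bar R)
    (phi : A -> B) (k : R) :
  (forall b, exists a, phi a = b) -> 0 <= k ->
  (forall a a', (0 <= dA a a')%E) -> (forall b b', (0 <= dB b b')%E) ->
  (forall a a', dB (phi a) (phi a') <= dA a a' + k%:E)%E ->
  (forall a a', dA a a' <= dB (phi a) (phi a') + k%:E)%E ->
  (dGH dA dB <= (k / 2)%:E)%E.
Proof.
move=> phi_onto k_ge0 dA_ge0 dB_ge0 dB_le dA_le.
pose C a b := b = phi a.
have C_corr : correspondence C.
  by split=> [a | b]; [exists (phi a) | have [a <-] := phi_onto b; exists a].
have distortion_le : (distortion dA dB C <= k%:E)%E.
  apply: ge_ereal_sup => _ [->|[a [_ [a' [_ [-> -> ->]]]]]]; first by rewrite lee_fin.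
  exact: disc_le.
rewrite /dGH mulrC EFinM; apply: lee_wpmul2l; first by rewrite lee_fin invr_ge0.
by apply: ge_ereal_inf; exists (distortion dA dB C) => //; exists C.
Qed.

End GromovHausdorff.

Lemma dGH_le_compatible_bijections (R : realType) (X Y : mdm R)
    (f : mV X -> mV Y) (g : mE X -> mE Y) :
  bijective f -> bijective g ->
  (forall e, mr Y (g e) = (f (mr X e).1, f (mr X e).2)) ->
  (dGH (@gdist R X) (@gdist R Y) <=
     (#|mE X|%:R / 2)%:E * (\big[Num.max/0]_e `|ml X e - ml Y (g e)|)%:E)%E.
Proof.
case=> f' fK f'K [g' gK g'K] fg_r.
set d := \big[Num.max/0]_e _.
have fg_r' e : mr X (g' e) = (f' (mr Y e).1, f' (mr Y e).2).
  by rewrite -[e in RHS]g'K fg_r /= !fK; case: (mr X _).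
have defect_le : length_defect g <= #|mE X|%:R * d.
  apply: (@le_trans _ _ (\sum_(e : mE X) d)); last by rewrite sumr_const mulr_natl.
  by apply: ler_sum => e _; apply: le_bigmax.
rewrite -EFinM mulrAC; apply: (dGH_le_surjection (phi := point_map f g)).
- by move=> y; exists (point_map f' g' y); apply: point_mapK.
- by apply: le_trans defect_le; apply: sumr_ge0.
- exact: gdist_ge0.
- exact: gdist_ge0.
- move=> x x'; apply: le_trans (gdist_point_map_le fg_r x x') _.
  by apply: leeD; rewrite ?lee_fin.
- move=> x x'; rewrite -[x in (gdist x _ <= _)%E](point_mapK fK gK).
  rewrite -[x' in (gdist _ x' <= _)%E](point_mapK fK gK).
  apply: le_trans (gdist_point_map_le fg_r' _ _) _.
  by apply: leeD; rewrite ?lee_fin ?(length_defect_inv gK g'K).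
Qed.

Theorem lemma5p1 (R : realType) (X X' : mdm R) :
  (dG X X' != +oo)%E \/ (0 < #|mE X|)%N ->
  (dGH (@gdist R X) (@gdist R X') <= (#|mE X|%:R / 2)%:E * dG X X')%E.
Proof.
rewrite /dG => nontrivial; set S := [set v | _] in nontrivial *.
have le_S v : S v -> (dGH (@gdist R X) (@gdist R X') <= (#|mE X|%:R / 2)%:E * v)%E.
  by move=> [f [g [f_bij g_bij fg_r ->]]]; apply: dGH_le_compatible_bijections fg_r.
have [E0 | E_gt0] := posnP #|mE X|; last first.
  rewrite -(ereal_inf_pZl S (r := #|mE X|%:R / 2)) ?divr_gt0 ?ltr0n //.
  by apply: le_ereal_inf_tmp => _ [v /le_S dGH_le <-].
case: nontrivial; last by rewrite E0.
have [->|/set0P[v Sv] _] := eqVneq S set0; first by rewrite ereal_inf0 eqxx.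
by have := le_S v Sv; rewrite E0 !mul0r !mul0e.
Qed.
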